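(* Let $n\ge 2$, $c_1,\dots,c_n>0$, and fix $i\in\{1,\dots,n\}$. Let $Q_i\in\mathbb{R}^{n\times n}$ be the symmetric matrix with $(Q_i)_{ii}=\frac{n-2}{c_i^2}$, $(Q_i)_{jj}=\frac{1}{c_j^2}$ and $(Q_i)_{ij}=(Q_i)_{ji}=-\frac{1}{c_ic_j}$ for $j\neq i$, and all other entries $0$. Let $c_o=\max_{j\neq i}c_j$ and $c_*=\min_{j\neq i}c_j$, and $S=\sum_{j=1,j\neq i}^n\frac{1}{c_j^2}$. Then every eigenvalue $\lambda$ of $Q_i$ satisfies $$\frac{1}{2}\left(\frac{n-2}{c_i^2}+\frac{1}{c_o^2}-\frac{1}{c_i}\sqrt{\left(\frac{n-2}{c_i}-\frac{c_i}{c_o^2}\right)^2+4S}\right)\ \le\ \lambda\ \le\ \frac{1}{2}\left(\frac{n-2}{c_i^2}+\frac{1}{c_*^2}+\frac{1}{c_i}\sqrt{\left(\frac{n-2}{c_i}-\frac{c_i}{c_*^2}\right)^2+4S}\right).$$ *)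

From HB Require Import structures.
From mathcomp Require Import all_boot all_order all_algebra.
Set Implicit Arguments. Unset Strict Implicit. Unset Printing Implicit Defensive.
Import Order.TTheory GRing.Theory Num.Theory.
Local Open Scope ring_scope.

Definition Qmat (R : fieldType) (n : nat) (c : 'I_n -> R) (i : 'I_n) : 'M[R]_n :=
  \matrix_(k, l)
    if k == l then
      (if k == i then (n - 2)%:R / (c i ^+ 2) else 1 / (c k ^+ 2))
    else if k == i then - 1 / (c i * c l)
    else if l == i then - 1 / (c k * c i)
    else 0.

From HB Require Import structures.
From mathcomp Require Import all_boot all_order all_algebra.
From mathcomp Require Import ring lra.
Set Implicit Arguments. Unset Strict Implicit. Unset Printing Implicit Defensive.
Import Order.TTheory GRing.Theory Num.Theory.
Local Open Scope ring_scope.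

(* Q_i is an arrowhead matrix: diagonal d_j = 1/c_j^2 away from row and column i,
   corner a = (n-2)/c_i^2 and border u_j = -1/(c_i c_j). If an eigenvalue lam is none
   of the d_j, eliminating the coordinates j <> i of an eigenvector leaves the secular
   equation a - lam = sum_j u_j^2 / (d_j - lam). When lam lies below the smaller
   root of (a - x)(b - x) = sum_j u_j^2 for some b <= min_j d_j, the right-hand side
   is at most sum_j u_j^2 / (b - lam) < a - lam, a contradiction. The upper bound is
   the lower one applied to -Q_i. *)

Definition arrow_mx (R : pzRingType) n (i : 'I_n) (a : R) (d u : 'I_n -> R) : 'M[R]_n :=
  \matrix_(k, l)
    if k == l then (if k == i then a else d k)
    else if k == i then u l
    else if l == i then u k
    else 0.

Lemma arrow_mxN (R : pzRingType) n (i : 'I_n) (a : R) (d u : 'I_n -> R) :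
  arrow_mx i (- a) (fun k => - d k) (fun k => - u k) = - arrow_mx i a d u.
Proof.
by apply/matrixP => k l; rewrite !mxE; do 3 case: eqP => //; rewrite oppr0.
Qed.

Lemma mul_row_arrow_mx (R : pzRingType) n (i : 'I_n) (a : R) (d u : 'I_n -> R)
    (v : 'rV_n) k :
  (v *m arrow_mx i a d u) 0 k =
  if k == i then v 0 i * a + \sum_(l | l != i) v 0 l * u l
  else v 0 i * u k + v 0 k * d k.
Proof.
rewrite mxE (bigD1 i) //= !mxE.
have [->|ki] := eqVneq k i.
  by rewrite eqxx; congr (_ + _); apply: eq_bigr => l li; rewrite !mxE (negbTE li) eqxx.
rewrite eqxx; congr (_ + _).
rewrite (bigD1 k) //= !mxE eqxx (negbTE ki) big1 ?addr0 // => l /andP[li lk].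
by rewrite !mxE (negbTE lk) (negbTE li) (negbTE ki) mulr0.
Qed.

Lemma arrow_mx_secular (R : fieldType) n (i : 'I_n) (a : R) (d u : 'I_n -> R)
    (v : 'rV_n) lam :
  v *m arrow_mx i a d u = lam *: v -> v != 0 -> (forall j, j != i -> d j != lam) ->
  a - lam = \sum_(j | j != i) u j ^+ 2 / (d j - lam).
Proof.
move=> hv v0 d_neq.
have col k : (v *m arrow_mx i a d u) 0 k = lam * v 0 k by rewrite hv mxE.
have vj j : j != i -> v 0 j = v 0 i * u j / (lam - d j).
  move=> ji; have dj : lam - d j != 0 by rewrite subr_eq0 eq_sym d_neq.
  apply: (mulIf dj); rewrite divfK // mulrBr (mulrC _ lam) -col.
  by rewrite mul_row_arrow_mx (negbTE ji); ring.
have vi : v 0 i != 0.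
  apply: contraNneq v0 => vi0; apply/eqP/rowP => j; rewrite mxE.
  by have [->|ji] := eqVneq j i; rewrite ?vi0 // (vj j ji) vi0 !mul0r.
apply: (mulfI vi); rewrite mulrBr (mulrC _ lam) -col mul_row_arrow_mx eqxx.
rewrite opprD addrA subrr add0r mulr_sumr -sumrN; apply: eq_bigr => j ji.
by rewrite (vj j ji) -[lam - d j]opprB invrN; ring.
Qed.

Lemma lt_min_root2 (R : rcfType) (a b U x : R) : 0 <= U ->
  x < (a + b - Num.sqrt ((a - b) ^+ 2 + 4 * U)) / 2 ->
  [/\ x < a, x < b & U < (a - x) * (b - x)].
Proof.
move=> U0; set s := Num.sqrt _ => hx.
have s0 : 0 <= s by exact: sqrtr_ge0.
have s2 : s ^+ 2 = (a - b) ^+ 2 + 4 * U by rewrite sqr_sqrtr // addr_ge0 ?sqr_ge0 ?mulr_ge0.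
have ab : a - b <= s by nra.
have ba : b - a <= s by nra.
split; [lra | lra | nra].
Qed.

Lemma arrow_mx_eigenvalue_ge (R : rcfType) n (i : 'I_n) (a b : R) (d u : 'I_n -> R) lam :
  (forall j, j != i -> b <= d j) -> eigenvalue (arrow_mx i a d u) lam ->
  (a + b - Num.sqrt ((a - b) ^+ 2 + 4 * \sum_(j | j != i) u j ^+ 2)) / 2 <= lam.
Proof.
move=> b_le /eigenvalueP[v hv v0]; rewrite leNgt; apply/negP.
set U := \sum_(j | j != i) _ => lam_lt.
have U0 : 0 <= U by apply: sumr_ge0 => j _; exact: sqr_ge0.
have [lam_a lam_b ltU] := lt_min_root2 U0 lam_lt.
have lam_d j : j != i -> lam < d j by move=> ji; exact: lt_le_trans lam_b (b_le j ji).
have d_neq j : j != i -> d j != lam by move=> ji; rewrite gt_eqF ?lam_d.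
have : (a - lam) * (b - lam) <= U.
  rewrite -ler_pdivlMr ?subr_gt0 // (arrow_mx_secular hv v0 d_neq) mulr_suml.
  apply: ler_sum => j ji.
  by rewrite ler_wpM2l ?sqr_ge0 // lef_pV2 ?posrE ?subr_gt0 ?lam_d ?lerD2r ?b_le.
by rewrite leNgt ltU.
Qed.

Lemma arrow_mx_eigenvalue_le (R : rcfType) n (i : 'I_n) (a b : R) (d u : 'I_n -> R) lam :
  (forall j, j != i -> d j <= b) -> eigenvalue (arrow_mx i a d u) lam ->
  lam <= (a + b + Num.sqrt ((a - b) ^+ 2 + 4 * \sum_(j | j != i) u j ^+ 2)) / 2.
Proof.
move=> le_b /eigenvalueP[v hv v0].
have hN : eigenvalue (arrow_mx i (- a) (fun k => - d k) (fun k => - u k)) (- lam).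
  by apply/eigenvalueP; exists v; rewrite // arrow_mxN mulmxN hv scaleNr.
have Nb_le j : j != i -> - b <= - d j by move=> ji; rewrite lerN2 le_b.
have := arrow_mx_eigenvalue_ge Nb_le hN.
have -> : (- a - - b) ^+ 2 = (a - b) ^+ 2 by rewrite -opprD sqrrN.
under eq_bigr do rewrite sqrrN.
lra.
Qed.

Lemma Qmat_arrow_mx (R : fieldType) n (c : 'I_n -> R) (i : 'I_n) :
  Qmat c i = arrow_mx i ((n - 2)%:R / c i ^+ 2) (fun k => 1 / c k ^+ 2)
                        (fun k => - 1 / (c i * c k)).
Proof.
apply/matrixP => k l; rewrite !mxE.
by case: eqP => // _; case: eqP => // _; case: eqP => // _; rewrite (mulrC (c k)).
Qed.

Theorem mainTheorem6 (R : rcfType) (n : nat) (hn : (2 <= n)%N)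
  (c : 'I_n -> R) (hc : forall j, 0 < c j) (i : 'I_n)
  (co cs : R)
  (hco : (exists2 j, j != i & c j = co) /\ (forall j, j != i -> c j <= co))
  (hcs : (exists2 j, j != i & c j = cs) /\ (forall j, j != i -> cs <= c j))
  (lambda : R) (hl : eigenvalue (Qmat c i) lambda) :
  let S := \sum_(j | j != i) 1 / (c j ^+ 2) in
  (1 / 2) * ((n - 2)%:R / (c i ^+ 2) + 1 / (co ^+ 2)
     - (1 / c i) * Num.sqrt (((n - 2)%:R / c i - c i / (co ^+ 2)) ^+ 2 + 4 * S))
  <= lambda /\
  lambda <= (1 / 2) * ((n - 2)%:R / (c i ^+ 2) + 1 / (cs ^+ 2)
     + (1 / c i) * Num.sqrt (((n - 2)%:R / c i - c i / (cs ^+ 2)) ^+ 2 + 4 * S)).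
Proof.
move=> S; rewrite Qmat_arrow_mx in hl.
case: hco => [[jo _ <-] le_co]; case: hcs => [[js _ <-] ge_cs].
have c_neq0 j : c j != 0 by rewrite gt_eqF.
have S_ge0 : 0 <= S by apply: sumr_ge0 => j _; rewrite divr_ge0 ?sqr_ge0.
have sumU : \sum_(j | j != i) (- 1 / (c i * c j)) ^+ 2 = S / c i ^+ 2.
  by rewrite mulr_suml; apply: eq_bigr => j _; field; rewrite !c_neq0.
have rad x : x != 0 ->
    1 / c i * Num.sqrt (((n - 2)%:R / c i - c i / x ^+ 2) ^+ 2 + 4 * S) =
    Num.sqrt (((n - 2)%:R / c i ^+ 2 - 1 / x ^+ 2) ^+ 2 + 4 * (S / c i ^+ 2)).
  move=> x0; rewrite -[1 / c i]ger0_norm ?divr_ge0 ?ltW // -sqrtr_sqr mulrC -sqrtrM.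
  - by congr Num.sqrt; field; rewrite x0 c_neq0.
  - by rewrite addr_ge0 ?sqr_ge0 ?mulr_ge0.
have inv_sqr_le j k : c j <= c k -> 1 / c k ^+ 2 <= 1 / c j ^+ 2.
  move=> le_jk; rewrite !div1r lef_pV2 ?posrE ?exprn_gt0 ?hc //.
  by rewrite ler_sqr ?nnegrE ?(ltW (hc _)).
have lo := arrow_mx_eigenvalue_ge (fun j ji => inv_sqr_le _ _ (le_co j ji)) hl.
have hi := arrow_mx_eigenvalue_le (fun j ji => inv_sqr_le _ _ (ge_cs j ji)) hl.
rewrite sumU in lo hi; rewrite !rad ?c_neq0 //; split; lra.
Qed.
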